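(* (1) Let $f,g$ be two packed words (of the same length). Then $f\leq g$ if, and only if, $\mathrm{Std}(f)=\mathrm{Std}(g)$ and $M(f)\subseteq M(g)$. (2) For all $n\geq1$, the map $$\Phi:(\{\text{packed words of length }n\},\leq)\longrightarrow\bigsqcup_{\sigma\in\mathfrak{S}_n}(\{\text{subsets of }M(\sigma)\},\subseteq),\qquad f\longmapsto M(f)\subseteq M(\mathrm{Std}(f)),$$ is an isomorphism of posets (the target being the disjoint union of the posets of subsets of $M(\sigma)$ ordered by inclusion, with elements in different components incomparable). Hence the poset of packed words of length $n$ is a disjoint union, indexed by $\sigma\in\mathfrak{S}_n$, of posets isomorphic to the Boolean lattices of subsets of $M(\sigma)$.
   Context: $[n]=\{1,\ldots,n\}$. A packed word of length $n$ is a word $f=f(1)\ldots f(n)$ of positive integers with $\{f(1),\ldots,f(n)\}=[\max f]$; permutations of $[n]$ are the packed words of length $n$ with distinct letters, $\mathfrak{S}_n$ their set. For packed words $f,g$ of length $n$, $g\leq f$ means: for all $i,j\in[n]$, $f(i)\leq f(j)\Rightarrow g(i)\leq g(j)$; $f(i)>f(j)$ and $i<j\Rightarrow g(i)>g(j)$; $f(i)=f(j)\Rightarrow g(i)=g(j)$. The standardization $\mathrm{Std}(f)$ of a packed word $f$ of length $n$ is the unique $\sigma\in\mathfrak{S}_n$ such that for all $i,j$: $f(i)<f(j)\Rightarrow\sigma(i)<\sigma(j)$, and ($f(i)=f(j)$ and $i<j$) $\Rightarrow\sigma(i)<\sigma(j)$. For a packed word $f$ of length $n$, $M(f)$ is the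 set of $i\in[n]$ such that: $f(i)<\max f$; for all $j\in[n]$, $f(j)=f(i)\Rightarrow j\leq i$; and for all $j\in[n]$, $f(j)=f(i)+1\Rightarrow j>i$. *)

From mathcomp Require Import all_boot all_fingroup.
Set Implicit Arguments. Unset Strict Implicit. Unset Printing Implicit Defensive.

(* A word of length n: positions are 'I_n (0-based: position i <-> i+1 of the
   paper), letters are natural numbers. *)
Definition word (n : nat) := {ffun 'I_n -> nat}.

Definition maxw n (f : word n) : nat := \max_(i < n) f i.

Definition packed n (f : word n) : bool :=
  all (fun k => k \in iota 1 (maxw f)) (codom f) &&
  all (fun k => k \in codom f) (iota 1 (maxw f)).

Definition is_perm_word n (f : word n) : bool := packed f && injectiveb f.

(* g <= f  (note the argument order: pw_le g f) *)
Definition pw_le n (g f : word n) : Prop :=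
  forall i j : 'I_n,
    (f i <= f j -> g i <= g j) /\
    (f i > f j -> i < j -> g i > g j) /\
    (f i = f j -> g i = g j).

Definition std_spec n (f : word n) (s : {perm 'I_n}) : bool :=
  [forall i, forall j,
     ((f i < f j) ==> (s i < s j)) && (((f i == f j) && (i < j)) ==> (s i < s j))].

(* Std(f): the unique permutation with the property above, as a word with
   letters in 1..n (value s(i)+1). *)
Definition Std n (f : word n) : word n :=
  [ffun i => (odflt 1%g [pick s : {perm 'I_n} | std_spec f s] i).+1].

Definition M n (f : word n) : {set 'I_n} :=
  [set i : 'I_n | [&& (f i < maxw f),
                      [forall j : 'I_n, (f j == f i) ==> (j <= i)] &
                      [forall j : 'I_n, (f j == (f i).+1) ==> (j > i)]]].

(* The map Phi : f |-> (Std f, M f), the target being the disjoint union over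
   sigma of the subsets of M(sigma). *)
Definition Phi n (f : word n) : word n * {set 'I_n} := (Std f, M f).

Definition du_le n (x y : word n * {set 'I_n}) : Prop :=
  x.1 = y.1 /\ x.2 \subset y.2.

From mathcomp Require Import all_boot all_fingroup zify.
Set Implicit Arguments. Unset Strict Implicit. Unset Printing Implicit Defensive.

(* Sort the positions of a packed word f by value, ties broken from left to
   right; this total order is Std f, and along it f is constant or goes up by
   one at each step i -> j. Since ties are broken left to right, f must go up
   when j lies left of i; when j lies right of i (i.e. i is in M (Std f)) f
   may go up or not, and M f is exactly the set of those free steps where it
   goes up. Hence f is determined by (Std f, M f), every subset of M (Std f)
   occurs, and f <= g amounts to Std f = Std g together with g going up at
   every free step where f does, i.e. M f \subset M g. *)

Section PackedWords.
Variable n : nat.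
Implicit Types f g : word n.

Lemma leq_maxw f i : f i <= maxw f.
Proof. exact: leq_bigmax. Qed.

Lemma maxw_attained f : 0 < maxw f -> exists i, f i = maxw f.
Proof.
move=> max_gt0; case: (pickP (fun _ : 'I_n => true)) => [i0 _|no_pos].
  by exists [arg max_(i > i0) f i]; rewrite /maxw (bigmax_eq_arg i0).
suff : maxw f <= 0 by rewrite leqNgt max_gt0.
by apply/bigmax_leqP => i; rewrite no_pos.
Qed.

Lemma packedP f : packed f <->
  ((forall i, 0 < f i) /\ (forall v, 0 < v -> v <= maxw f -> exists i, f i = v)).
Proof.
rewrite /packed; split.
- case/andP => /allP in_range /allP attained; split.
  + by move=> i; have := in_range _ (codom_f f i); rewrite mem_iota; lia.
  + move=> v v_gt0 v_le; have : v \in iota 1 (maxw f) by rewrite mem_iota; lia.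
    by move/attained/codomP => [i ->]; exists i.
- case=> pos attained; apply/andP; split; apply/allP => k.
  + by case/codomP => i ->; rewrite mem_iota; have := pos i; have := leq_maxw f i; lia.
  + rewrite mem_iota => k_in.
    by have [||i <-] := attained k; [lia | lia | exact: codom_f].
Qed.

Lemma packed_gt0 f i : packed f -> 0 < f i.
Proof. by case/packedP => pos _. Qed.

Lemma packed_attained f v : packed f -> 0 < v -> v <= maxw f -> exists i, f i = v.
Proof. by case/packedP => _ attained; apply: attained. Qed.

End PackedWords.

Definition ltw n (f : word n) (i j : 'I_n) : bool :=
  (f i < f j) || ((f i == f j) && (i < j)).

Section LexOrder.
Variable n : nat.
Implicit Types f g : word n.

Lemma ltw_irr f i : ltw f i i = false.
Proof. rewrite /ltw; lia. Qed.

Lemma ltw_asym f i j : ltw f i j -> ltw f j i = false.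
Proof. rewrite /ltw; lia. Qed.

Lemma ltw_trans f i j k : ltw f i j -> ltw f j k -> ltw f i k.
Proof. rewrite /ltw; lia. Qed.

Lemma ltw_total f i j : i != j -> ltw f i j || ltw f j i.
Proof. by move=> neq_ij; have : nat_of_ord i != j by []; rewrite /ltw; lia. Qed.

Lemma ltw_leq f i j : ltw f i j -> f i <= f j.
Proof. rewrite /ltw; lia. Qed.

Lemma ltw_ltn f i j : f i < f j -> ltw f i j.
Proof. by rewrite /ltw => ->. Qed.

Lemma ltw_eq f i j : f i = f j -> i < j -> ltw f i j.
Proof. by rewrite /ltw => -> ->; rewrite eqxx orbT. Qed.

Lemma ltw_eq_ltn f i j : ltw f i j -> f i = f j -> i < j.
Proof. rewrite /ltw; lia. Qed.

Lemma ltw_injE f i j : injective f -> ltw f i j = (f i < f j).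
Proof.
move=> f_inj; rewrite /ltw; case: (eqVneq (f i) (f j)) => [fij|]; last by rewrite orbF.
by rewrite (f_inj _ _ fij) !ltnn.
Qed.

Lemma eq_ltw_sub f g : (forall i j, ltw g i j -> ltw f i j) -> ltw f =2 ltw g.
Proof.
move=> sub i j; case gij: (ltw g i j); first by rewrite sub.
case: (eqVneq i j) => [->|neq_ij]; first by rewrite ltw_irr.
by have := ltw_total g neq_ij; rewrite gij /= => /sub /ltw_asym.
Qed.

End LexOrder.

Section Standardization.
Variable n : nat.
Implicit Types f g : word n.

Lemma std_specP f (s : {perm 'I_n}) :
  reflect (forall i j, ltw f i j -> s i < s j) (std_spec f s).
Proof.
apply: (iffP forallP) => [spec i j|mono i].
- move/forallP: (spec i) => /(_ j) /andP [lt_case eq_case].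
  by rewrite /ltw => /orP [/(implyP lt_case)|/(implyP eq_case)].
- apply/forallP => j; apply/andP; split; apply/implyP => fij; apply: mono.
  + exact: ltw_ltn.
  + by rewrite /ltw fij orbT.
Qed.

Definition ltw_rank f (i : 'I_n) := #|[set k | ltw f k i]|.

Lemma ltw_rank_lt f i : ltw_rank f i < n.
Proof.
rewrite -[n]card_ord -cardsT; apply: proper_card; apply/properP; split.
  exact: subsetT.
by exists i; rewrite ?inE ?ltw_irr.
Qed.

Lemma ltw_rank_mono f i j : ltw f i j -> ltw_rank f i < ltw_rank f j.
Proof.
move=> fij; apply: proper_card; apply/properP; split.
  by apply/subsetP => k; rewrite !inE => /ltw_trans; apply.
by exists i; rewrite ?inE ?ltw_irr.
Qed.

Lemma std_spec_exists f : exists s : {perm 'I_n}, std_spec f s.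
Proof.
pose rank (i : 'I_n) := Ordinal (ltw_rank_lt f i).
have rank_inj : injective rank.
  move=> i j /(congr1 val) /= eq_rank; apply/eqP; apply/negPn/negP => neq_ij.
  by case/orP: (ltw_total f neq_ij) => /ltw_rank_mono; rewrite eq_rank ltnn.
by exists (perm rank_inj); apply/std_specP => i j fij; rewrite !permE; apply: ltw_rank_mono.
Qed.

Lemma StdE f : exists s : {perm 'I_n}, std_spec f s /\ forall i, Std f i = (s i).+1.
Proof.
rewrite /Std; case: pickP => [s spec|none]; first by exists s; split => // i; rewrite ffunE.
by have [s] := std_spec_exists f; rewrite none.
Qed.

Lemma Std_inj f : injective (Std f).
Proof. by have [s [_ Ss]] := StdE f; move=> i j; rewrite !Ss => -[] /val_inj /perm_inj. Qed.

Lemma ltw_Std f : ltw (Std f) =2 ltw f.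
Proof.
apply: eq_ltw_sub => i j fij; have [s [/std_specP s_mono Ss]] := StdE f.
by rewrite ltw_injE; [rewrite !Ss ltnS; apply: s_mono | apply: Std_inj].
Qed.

Lemma Std_eqP f g : Std f = Std g <-> ltw f =2 ltw g.
Proof.
split=> [eq_Std i j|eq_ltw]; first by rewrite -ltw_Std eq_Std ltw_Std.
rewrite /Std; congr finfun; rewrite (@eq_pick _ _ (std_spec g)) // => s.
by apply/std_specP/std_specP => s_mono i j; [rewrite -eq_ltw | rewrite eq_ltw]; apply: s_mono.
Qed.

Lemma Std_packed f : packed (Std f).
Proof.
have [s [_ Ss]] := StdE f; apply/packedP; split => [i|v v_gt0 v_le]; first by rewrite Ss.
have max_le : maxw (Std f) <= n by apply/bigmax_leqP => i _; rewrite Ss.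
have v_lt : v.-1 < n by lia.
by exists ((s^-1)%g (Ordinal v_lt)); rewrite Ss permKV /=; lia.
Qed.

Lemma Std_perm_word f : is_perm_word (Std f).
Proof. by rewrite /is_perm_word Std_packed; apply/injectiveP/Std_inj. Qed.

End Standardization.

Definition refines n (f g : word n) : Prop := forall i j, f i < f j -> g i < g j.

Section Refinement.
Variable n : nat.
Implicit Types f g : word n.

Lemma refines_eq f g i j : refines f g -> g i = g j -> f i = f j.
Proof. by move=> ref gij; case: (ltngtP (f i) (f j)) => // /ref; rewrite gij ltnn. Qed.

Lemma refines_inj f g : injective g -> ltw f =2 ltw g -> refines f g.
Proof. by move=> g_inj eq_ltw i j /ltw_ltn; rewrite eq_ltw ltw_injE. Qed.

Lemma refines_Std f : refines f (Std f).
Proof. by apply: refines_inj; [apply: Std_inj | move=> i j; rewrite ltw_Std]. Qed.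

Lemma eq_packed f g : packed f -> packed g -> refines f g -> refines g f -> f = g.
Proof.
move=> pf pg fg gf; suff f_eq : forall v i, f i = v -> g i = v.
  by apply/ffunP => i; rewrite (f_eq _ i erefl).
elim/ltn_ind => v IH i fi; have := packed_gt0 i pg; have := leq_maxw g i.
have := packed_gt0 i pf; have := leq_maxw f i; rewrite fi => f_le f_gt0 g_le g_gt0.
case: (ltngtP (g i) v) => [g_lt|g_gt|//].
- have [k fk] : exists k, f k = v.-1 by apply: packed_attained; lia.
  have v1_lt : v.-1 < v by lia.
  by have := IH _ v1_lt k fk; have := fg k i; rewrite fk fi; lia.
- have [k gk] := packed_attained pg f_gt0 (leq_trans (ltnW g_gt) g_le).
  have fk_lt : f k < v by rewrite -fi; apply: gf; rewrite gk.
  by have := IH _ fk_lt k erefl; lia.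
Qed.

Lemma MP f i : reflect [/\ f i < maxw f, (forall j, f j = f i -> j <= i)
   & (forall j, f j = (f i).+1 -> i < j)] (i \in M f).
Proof.
rewrite /M inE; apply: (iffP and3P) => [[max /forallP last /forallP next]|[max last next]].
- split=> // j fj; [apply: (implyP (last j)) | apply: (implyP (next j))]; exact/eqP.
- by split=> //; apply/forallP => j; apply/implyP => /eqP; [apply: last | apply: next].
Qed.

Lemma last_occurrence f i : exists2 l, f l = f i & forall k, f k = f i -> k <= l.
Proof.
case: (@arg_maxnP _ i (fun l => f l == f i) val) => // l /eqP fl l_max.
by exists l => // k /eqP; apply: l_max.
Qed.

Lemma first_occurrence f i : exists2 l, f l = f i & forall k, f k = f i -> l <= k.
Proof.
case: (@arg_minnP _ i (fun l => f l == f i) val) => // l /eqP fl l_min.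
by exists l => // k /eqP; apply: l_min.
Qed.

Lemma ltw_leq_eq f g i j : ltw f =2 ltw g ->
  f i <= f j -> (f i = f j -> i <= j) -> g i <= g j.
Proof.
move=> eq_ltw fij eq_le; case: (eqVneq i j) => [-> //|neq_ij].
apply: ltw_leq; rewrite -eq_ltw; move: fij; rewrite leq_eqVlt => /orP [/eqP fij|].
  by apply: ltw_eq => //; rewrite ltn_neqAle eq_le // andbT; exact: neq_ij.
exact: ltw_ltn.
Qed.

Section SameLtw.
Variables f g : word n.
Hypothesis pf : packed f.
Hypothesis eq_ltw : ltw f =2 ltw g.

Lemma refines_M_sub : refines f g -> M f \subset M g.
Proof.
move=> fg; apply/subsetP => i /MP [lt_max last next]; apply/MP; split.
- have [k fk] := maxw_attained (leq_ltn_trans (leq0n _) lt_max).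
  by apply: leq_trans (leq_maxw g k); apply: fg; rewrite fk.
- by move=> j /(refines_eq fg); apply: last.
- move=> j gj; have fij : ltw f i j by rewrite eq_ltw; apply: ltw_ltn; rewrite gj.
  case: (ltngtP (f j) (f i).+1) => [lt|gt|]; last exact: next.
  + by apply: (ltw_eq_ltn fij); have := ltw_leq fij; lia.
  + have [k fk] := packed_attained pf (ltn0Sn (f i)) (leq_trans (ltnW gt) (leq_maxw f j)).
    by have := fg i k; have := fg k j; rewrite fk gj; lia.
Qed.

(* If f splits a level set of g, the last position l of the lower value and the
   first position l' of the next one share their g-value with l < l', so that l
   lies in M f but not in M g. *)
Lemma M_sub_eq i j : M f \subset M g -> g i = g j -> i < j -> f i = f j.
Proof.
move=> sub gij lt_ij; have fij : ltw f i j by rewrite eq_ltw; apply: ltw_eq.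
move: (ltw_leq fij); rewrite leq_eqVlt => /orP [/eqP //|f_lt].
have [l fl l_last] := last_occurrence f i.
have [k fk] := packed_attained pf (ltn0Sn (f i)) (leq_trans f_lt (leq_maxw f j)).
have [l' fl' l'_first] := first_occurrence f k.
have g_il : g i <= g l.
  by apply: (ltw_leq_eq eq_ltw); rewrite fl // => _; apply: l_last.
have g_ll' : g l <= g l'.
  by apply: (ltw_leq_eq eq_ltw); rewrite fl fl' fk //; lia.
have g_l'j : g l' <= g j.
  by apply: (ltw_leq_eq eq_ltw); rewrite fl' fk // => fl'j; apply: l'_first; rewrite -fl'j fk.
have g_eq : g l = g l' by lia.
have ll' : l < l' by apply: (ltw_eq_ltn _ g_eq); rewrite -eq_ltw ltw_ltn // fl fl' fk.
have /(subsetP sub) /MP [_ g_last _] : l \in M f.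
  apply/MP; split; first by rewrite fl -fk -fl'; apply: leq_maxw.
  - by rewrite fl; apply: l_last.
  - by move=> m fm; apply: leq_trans ll' _; apply: l'_first; rewrite fm fl fk.
by have := g_last _ (esym g_eq); lia.
Qed.

Lemma M_sub_refines : M f \subset M g -> refines f g.
Proof.
move=> sub i j f_lt; have gij : ltw g i j by rewrite -eq_ltw; apply: ltw_ltn.
move: (ltw_leq gij); rewrite leq_eqVlt => /orP [/eqP g_eq|//].
by move: f_lt; rewrite (M_sub_eq sub g_eq (ltw_eq_ltn gij g_eq)) ltnn.
Qed.

End SameLtw.

Lemma pw_le_ltw f g : pw_le f g -> ltw f =2 ltw g.
Proof.
move=> le; apply: eq_ltw_sub => i j /orP [g_lt|/andP [/eqP g_eq lt_ij]].
- have [[le_ij _] [_ [gt_ji _]]] := (le i j, le j i).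
  move: (le_ij (ltnW g_lt)); rewrite leq_eqVlt => /orP [/eqP f_eq|]; last exact: ltw_ltn.
  case: (ltngtP i j) => [lt_ij|lt_ji|/val_inj eq_ij]; first exact: ltw_eq.
  + by have := gt_ji g_lt lt_ji; lia.
  + by move: g_lt; rewrite eq_ij ltnn.
- by have [_ [_ eq_ij]] := le i j; apply: ltw_eq => //; apply: eq_ij.
Qed.

Lemma pw_leP f g : pw_le f g <-> ltw f =2 ltw g /\ refines f g.
Proof.
split=> [le|[eq_ltw fg] i j].
- split=> [|i j f_lt]; first exact: pw_le_ltw.
  by have [le_ji _] := le j i; move: le_ji f_lt; lia.
- split; [|split].
  + by have := fg j i; lia.
  + move=> g_gt lt_ij; have : ltw f j i by rewrite eq_ltw; apply: ltw_ltn.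
    by rewrite /ltw; lia.
  + exact: refines_eq.
Qed.

End Refinement.

Section Classification.
Variable n : nat.
Implicit Types f g : word n.

Lemma pw_le_iff f g : packed f -> pw_le f g <-> Std f = Std g /\ M f \subset M g.
Proof.
move=> pf; rewrite pw_leP Std_eqP; split=> -[eq_ltw sub]; split=> //.
- exact: refines_M_sub.
- exact: M_sub_refines.
Qed.

Lemma M_sub_Std f : packed f -> M f \subset M (Std f).
Proof.
move=> pf; have eq_ltw : ltw f =2 ltw (Std f) by move=> i j; rewrite ltw_Std.
exact: (refines_M_sub pf eq_ltw (@refines_Std _ f)).
Qed.

Lemma Std_perm_word_id (s : word n) : is_perm_word s -> Std s = s.
Proof.
case/andP => ps /injectiveP s_inj; have eq_ltw := @ltw_Std _ s.
apply: eq_packed; rewrite ?Std_packed //; first exact: refines_inj eq_ltw.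
by apply: (refines_inj (@Std_inj _ s)) => i j; rewrite eq_ltw.
Qed.

Lemma Std_M_inj f g : packed f -> packed g -> Std f = Std g -> M f = M g -> f = g.
Proof.
move=> pf pg /Std_eqP eq_ltw eq_M; apply: eq_packed => //.
- by apply: M_sub_refines; rewrite ?eq_M.
- by apply: M_sub_refines; rewrite ?eq_M // => i j; rewrite eq_ltw.
Qed.

End Classification.

Section Surjection.
Variables (n : nat) (s : word n) (S : {set 'I_n}).
Hypotheses (s_packed : packed s) (s_inj : injective s) (S_sub : S \subset M s).

(* Read in increasing order of s, this word goes up by one right after each
   position of [rises] and is constant elsewhere: the forced steps (outside
   M s) together with the chosen ones (S). *)
Definition rises := [set i | (s i < maxw s) && ((i \in S) || (i \notin M s))].
Definition below_rises i := [set k in rises | s k < s i].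
Definition pw_of_subset : word n := [ffun i => #|below_rises i|.+1].

Local Notation f := pw_of_subset.

Lemma in_rises i : (i \in rises) = (s i < maxw s) && ((i \in S) || (i \notin M s)).
Proof. by rewrite inE. Qed.

Lemma in_below_rises k i : (k \in below_rises i) = (k \in rises) && (s k < s i).
Proof. by rewrite inE. Qed.

Lemma pw_of_subsetE i : f i = #|below_rises i|.+1.
Proof. by rewrite ffunE. Qed.

Lemma pw_of_subset_mono i j : s i <= s j -> f i <= f j.
Proof.
move=> le_ij; rewrite !pw_of_subsetE ltnS; apply/subset_leq_card/subsetP => k.
by rewrite !in_below_rises => /andP [-> lt_ki]; apply: leq_trans le_ij.
Qed.

Lemma pw_of_subset_succ i j : s j = (s i).+1 -> f j = f i + (i \in rises).
Proof.
move=> sj; rewrite !pw_of_subsetE; case i_rise: (i \in rises).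
- have -> : below_rises j = i |: below_rises i.
    apply/setP => k; rewrite in_setU1 !in_below_rises sj ltnS leq_eqVlt (inj_eq s_inj).
    by case: eqVneq => [->|_] //=; rewrite i_rise.
  by rewrite cardsU1 in_below_rises ltnn andbF addn1.
- have -> // : below_rises j = below_rises i.
    apply/setP => k; rewrite !in_below_rises sj ltnS leq_eqVlt (inj_eq s_inj).
    by case: eqVneq => [->|_] //=; rewrite i_rise.
  by rewrite addn0.
Qed.

Lemma leq_of_rise_free d i j : s j = s i + d ->
  (forall k, s i <= s k -> s k < s j -> k \notin rises) -> i <= j.
Proof.
elim: d i j => [|d IH] i j sj no_rise; first by rewrite addn0 in sj; rewrite (s_inj sj).
have [k sk] : exists k, s k = s i + d.
  move: (packed_gt0 i s_packed) (leq_maxw s j) => ? ?.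
  by apply: (packed_attained s_packed); lia.
have le_ik : i <= k by apply: (IH _ _ sk) => m ? ?; apply: no_rise; lia.
have k_max : s k < maxw s by have := leq_maxw s j; lia.
have : k \notin rises by apply: no_rise; lia.
rewrite in_rises k_max /= negb_or negbK => /andP [_ /MP [_ _ next]].
by have := next j; rewrite sk sj addnS => /(_ erefl); lia.
Qed.

Lemma ltw_pw_of_subset_ltn i j : s i < s j -> ltw f i j.
Proof.
move=> lt_ij; move: (pw_of_subset_mono (ltnW lt_ij)).
rewrite leq_eqVlt => /orP [/eqP f_eq|]; last exact: ltw_ltn.
apply: ltw_eq => //; have : i <= j.
  apply: (@leq_of_rise_free (s j - s i)); first lia.
  move=> k le_ik lt_kj; apply/negP => k_rise.
  have : #|below_rises i| < #|below_rises j|.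
    apply: proper_card; apply/properP; split.
      by apply/subsetP => m; rewrite !in_below_rises => /andP [-> ?]; lia.
    by exists k; rewrite !in_below_rises k_rise //= ltnNge le_ik.
  by move: f_eq; rewrite !pw_of_subsetE; lia.
rewrite leq_eqVlt => /orP [/eqP /val_inj eq_ij|//].
by move: lt_ij; rewrite eq_ij ltnn.
Qed.

Lemma ltw_pw_of_subset : ltw f =2 ltw s.
Proof. by apply: eq_ltw_sub => i j; rewrite ltw_injE //; apply: ltw_pw_of_subset_ltn. Qed.

Lemma pw_of_subset_packed : packed f.
Proof.
apply/packedP; split => [i|v v_gt0 v_le]; first by rewrite pw_of_subsetE.
suff attained m : forall i, s i = m -> v <= f i -> exists k, f k = v.
  have [i fi] := maxw_attained (leq_trans v_gt0 v_le).
  by apply: (attained _ i erefl); rewrite fi.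
elim: m => [|m IH] i si v_le_fi; first by have := packed_gt0 i s_packed; lia.
case: (eqVneq v (f i)) => [->|v_neq]; first by exists i.
case: m IH si => [|m] IH si.
  have below_empty : below_rises i = set0.
    apply/setP => k; rewrite in_below_rises in_set0 si ltnS leqn0.
    by rewrite (negbTE (lt0n_neq0 (packed_gt0 k s_packed))) andbF.
  by move: v_neq v_le_fi; rewrite pw_of_subsetE below_empty cards0; lia.
have [j sj] : exists j, s j = m.+1.
  by apply: (packed_attained s_packed) => //; apply: leq_trans (leq_maxw s i); rewrite si.
apply: (IH j sj); have := pw_of_subset_succ (_ : s i = (s j).+1).
by rewrite si sj => /(_ erefl); lia.
Qed.

Lemma M_pw_of_subset_sub : M f \subset S.
Proof.
apply/subsetP => i /MP [f_max f_last f_next].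
have s_max : s i < maxw s.
  rewrite ltnNge; apply/negP => s_max; move: f_max; rewrite ltnNge => /negP; apply.
  apply/bigmax_leqP => k _; apply: pw_of_subset_mono.
  exact: leq_trans (leq_maxw s k) s_max.
have [j sj] := packed_attained s_packed (ltn0Sn (s i)) s_max.
have f_j := pw_of_subset_succ sj.
have lt_sij : s i < s j by rewrite sj.
have i_rise : i \in rises.
  apply: contraT => i_no; move: f_j; rewrite (negbTE i_no) addn0 => f_eq.
  have := ltw_eq_ltn (ltw_pw_of_subset_ltn lt_sij) (esym f_eq).
  by have := f_last _ f_eq; lia.
move: (i_rise); rewrite in_rises s_max /= => /orP [//|i_notM].
have := f_next j; rewrite f_j i_rise addn1 => /(_ erefl) lt_ij.
case/negP: i_notM; apply/MP; split=> // k; first by move/s_inj ->.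
by rewrite -sj => /s_inj ->.
Qed.

Lemma sub_M_pw_of_subset : S \subset M f.
Proof.
apply/subsetP => i iS; have /MP [s_max _ s_next] := subsetP S_sub i iS.
have [j sj] := packed_attained s_packed (ltn0Sn (s i)) s_max.
have f_j : f j = (f i).+1 by rewrite (pw_of_subset_succ sj) in_rises s_max iS addn1.
have lt_ij := s_next j sj.
apply/MP; split=> [|k f_k|k f_k].
- by have := leq_maxw f j; lia.
- case: (ltngtP (s k) (s i)) => [lt_ki|gt_ki|/s_inj -> //].
  + by apply/ltnW/(ltw_eq_ltn (ltw_pw_of_subset_ltn lt_ki)).
  + by have := pw_of_subset_mono (_ : s j <= s k); rewrite sj f_k f_j => /(_ gt_ki); lia.
- have : s i < s k by rewrite -ltw_injE // -ltw_pw_of_subset; apply: ltw_ltn; rewrite f_k.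
  case: (ltngtP (s k) (s j)) => [|gt_kj|/s_inj -> //]; first by rewrite sj; lia.
  by have := ltw_eq_ltn (ltw_pw_of_subset_ltn gt_kj) (etrans f_j (esym f_k)); lia.
Qed.

Lemma M_pw_of_subset : M f = S.
Proof. by apply/eqP; rewrite eqEsubset M_pw_of_subset_sub sub_M_pw_of_subset. Qed.

Lemma Std_pw_of_subset : Std f = s.
Proof.
have s_perm : is_perm_word s by rewrite /is_perm_word s_packed; apply/injectiveP.
by rewrite -[RHS](Std_perm_word_id s_perm); apply/Std_eqP/ltw_pw_of_subset.
Qed.

End Surjection.

Theorem theorem23 :
  (forall n (f g : word n), packed f -> packed g ->
     (pw_le f g <-> (Std f = Std g /\ M f \subset M g)))
  /\
  (forall n, 1 <= n ->
     (forall f : word n, packed f ->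
        is_perm_word (Phi f).1 /\ (Phi f).2 \subset M (Phi f).1) /\
     (forall f g : word n, packed f -> packed g -> Phi f = Phi g -> f = g) /\
     (forall (s : word n) (S : {set 'I_n}), is_perm_word s -> S \subset M s ->
        exists f : word n, packed f /\ Phi f = (s, S)) /\
     (forall f g : word n, packed f -> packed g ->
        (pw_le f g <-> du_le (Phi f) (Phi g)))).
Proof.
split=> [n f g pf _|n _]; first exact: pw_le_iff.
split; [|split; [|split]].
- by move=> f pf; split; [apply: Std_perm_word | apply: M_sub_Std].
- by move=> f g pf pg [eq_Std eq_M]; apply: Std_M_inj.
- move=> s S /andP [ps /injectiveP s_inj] S_sub.
  exists (pw_of_subset s S); split; first exact: pw_of_subset_packed.
  by rewrite /Phi Std_pw_of_subset ?M_pw_of_subset.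
- by move=> f g pf _; apply: pw_le_iff.
Qed.
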